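(* Let $\Gamma$ be a group and $S$ a $\Gamma$-graded semigroup. Then there is a $\Gamma$-graded pointed set $X$ and an injective semigroup homomorphism $\psi:S\to\mathcal{T}^{\mathrm{gr}}(X)$ such that $\psi(S_\alpha)\subseteq\mathcal{T}(X)_\alpha$ for all $\alpha\in\Gamma$.
   Context: Semigroups have a zero; $S$ is $\Gamma$-graded via $\deg:S\setminus\{0\}\to\Gamma$ with $\deg(st)=\deg(s)\deg(t)$ when $st\neq0$, $S_\alpha=\deg^{-1}(\alpha)\cup\{0\}$. A pointed set $X$ (with distinguished $0_X$) is $\Gamma$-graded if there is a map $\phi:X\setminus\{0_X\}\to\Gamma$; $X_\alpha=\phi^{-1}(\alpha)\cup\{0_X\}$. $\mathcal T'(X)$ is the semigroup under composition of all maps $X\to X$ fixing $0_X$, with zero the constant map to $0_X$. $\mathcal T(X)_\alpha=\{\psi\in\mathcal T'(X):\psi(X_\beta)\subseteq X_{\alpha\beta}\text{ for all }\beta\in\Gamma\}$ and $\mathcal T^{\mathrm{gr}}(X)=\bigcup_{\alpha}\mathcal T(X)_\alpha$, a $\Gamma$-graded subsemigroup of $\mathcal T'(X)$ with components $\mathcal T(X)_\alpha$. *)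

Definition is_group (G : Type) (mul : G -> G -> G) (one : G) (inv : G -> G) : Prop :=
  (forall a b c, mul a (mul b c) = mul (mul a b) c) /\
  (forall a, mul one a = a) /\ (forall a, mul a one = a) /\
  (forall a, mul (inv a) a = one) /\ (forall a, mul a (inv a) = one).

Definition is_semigroup0 (S : Type) (smul : S -> S -> S) (zero : S) : Prop :=
  (forall a b c, smul a (smul b c) = smul (smul a b) c) /\
  (forall a, smul zero a = zero) /\ (forall a, smul a zero = zero).

(* deg : S \ {0} -> G, represented as a total function whose values on 0 are
   irrelevant; deg(st) = deg(s) deg(t) whenever st <> 0. *)
Definition is_grading {G S : Type} (mul : G -> G -> G) (smul : S -> S -> S)
  (zero : S) (deg : S -> G) : Prop :=
  forall s t, smul s t <> zero -> deg (smul s t) = mul (deg s) (deg t).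

Definition comp_S {G S : Type} (zero : S) (deg : S -> G) (alpha : G) (s : S) : Prop :=
  s = zero \/ (s <> zero /\ deg s = alpha).

Definition comp_X {G X : Type} (x0 : X) (phi : X -> G) (beta : G) (x : X) : Prop :=
  x = x0 \/ (x <> x0 /\ phi x = beta).

Definition in_T' {X : Type} (x0 : X) (f : X -> X) : Prop := f x0 = x0.

Definition in_T_comp {G X : Type} (mul : G -> G -> G) (x0 : X) (phi : X -> G)
  (alpha : G) (f : X -> X) : Prop :=
  in_T' x0 f /\
  forall beta x, comp_X x0 phi beta x -> comp_X x0 phi (mul alpha beta) (f x).

Definition in_Tgr {G X : Type} (mul : G -> G -> G) (x0 : X) (phi : X -> G)
  (f : X -> X) : Prop :=
  exists alpha, in_T_comp mul x0 phi alpha f.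

(* Let S act on X := S^1 x Gamma, with base point (0, 1), by
   s . (u, g) = (s u, deg(s) g), sending the point to the base point whenever
   s u = 0.  Grading a point by its Gamma-coordinate makes s act in degree
   deg(s), and the action is faithful because the first coordinate of
   s . (1, g) is s itself. *)

From Stdlib Require Import ClassicalEpsilon FunctionalExtensionality.

Lemma in_T_comp_const {G X : Type} (mul : G -> G -> G) (x0 : X) (phi : X -> G)
  (alpha : G) : in_T_comp mul x0 phi alpha (fun _ => x0).
Proof. split; [reflexivity | intros beta x _; left; reflexivity]. Qed.

Section CayleyEmbedding.

Context {G : Type} (mul : G -> G -> G) (one : G).
Hypothesis mulA : forall a b c, mul a (mul b c) = mul (mul a b) c.

Context {S : Type} (smul : S -> S -> S) (zero : S).
Hypothesis smulA : forall a b c, smul a (smul b c) = smul (smul a b) c.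
Hypothesis smul0l : forall a, smul zero a = zero.
Hypothesis smulr0 : forall a, smul a zero = zero.

Variable deg : S -> G.
Hypothesis degM : is_grading mul smul zero deg.

(* [option S] is the monoid S^1: [None] is the adjoined identity. *)
Definition lmul1 (s : S) (u : option S) : S :=
  match u with None => s | Some t => smul s t end.

Lemma lmul1M (s t : S) (u : option S) :
  lmul1 (smul s t) u = lmul1 s (Some (lmul1 t u)).
Proof. destruct u; simpl; auto. Qed.

Lemma lmul10 (u : option S) : lmul1 zero u = zero.
Proof. destruct u; simpl; auto. Qed.

Definition base_pt : option S * G := (Some zero, one).

Definition cayley (s : S) (x : option S * G) : option S * G :=
  if excluded_middle_informative (lmul1 s (fst x) = zero) then base_pt
  else (Some (lmul1 s (fst x)), mul (deg s) (snd x)).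

Lemma cayley_base_pt (s : S) : cayley s base_pt = base_pt.
Proof.
  unfold cayley; simpl.
  destruct (excluded_middle_informative _) as [_ | Hs]; auto.
  now rewrite smulr0 in Hs.
Qed.

Lemma cayley0 : cayley zero = fun _ => base_pt.
Proof.
  apply functional_extensionality; intros x; unfold cayley.
  destruct (excluded_middle_informative _) as [_ | Hx]; auto.
  now rewrite lmul10 in Hx.
Qed.

Lemma cayley_fst_unit (s : S) (g : G) : fst (cayley s (None, g)) = Some s.
Proof. unfold cayley; simpl; destruct (excluded_middle_informative _) as [-> | _]; reflexivity. Qed.

Lemma cayley_inj (s t : S) : cayley s = cayley t -> s = t.
Proof.
  intros E.
  assert (Est : Some s = Some t).
  { now rewrite <- (cayley_fst_unit s one), <- (cayley_fst_unit t one), E. }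
  now injection Est.
Qed.

Lemma cayleyM (s t : S) : cayley (smul s t) = fun x => cayley s (cayley t x).
Proof.
  apply functional_extensionality; intros [u g].
  unfold cayley at 1 3; simpl; rewrite lmul1M.
  destruct (excluded_middle_informative (lmul1 t u = zero)) as [Htu | Htu].
  - rewrite cayley_base_pt, Htu; simpl.
    destruct (excluded_middle_informative _) as [_ | H]; auto.
    now rewrite smulr0 in H.
  - unfold cayley; simpl.
    destruct (excluded_middle_informative _) as [_ | Hstu]; auto.
    assert (Hst : smul s t <> zero).
    { intros Hst; apply Hstu; rewrite <- (lmul10 u), <- Hst; symmetry; apply lmul1M. }
    now rewrite degM, mulA.
Qed.

Lemma cayley_graded (s : S) : in_T_comp mul base_pt snd (deg s) (cayley s).
Proof.
  split; [apply cayley_base_pt |].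
  intros beta x [-> | [_ Hx]]; [left; apply cayley_base_pt |].
  unfold cayley; destruct (excluded_middle_informative _) as [_ | Hs]; [now left |].
  right; split; simpl; [| congruence].
  intros E; apply Hs; now injection E.
Qed.

Lemma cayley_comp (alpha : G) (s : S) :
  comp_S zero deg alpha s -> in_T_comp mul base_pt snd alpha (cayley s).
Proof.
  intros [-> | [_ <-]]; [rewrite cayley0; apply in_T_comp_const | apply cayley_graded].
Qed.

End CayleyEmbedding.


Theorem proposition2p5
  (G : Type) (mul : G -> G -> G) (one : G) (inv : G -> G)
  (HG : is_group G mul one inv)
  (S : Type) (smul : S -> S -> S) (zero : S)
  (HS : is_semigroup0 S smul zero)
  (deg : S -> G) (Hdeg : is_grading mul smul zero deg) :
  exists (X : Type) (x0 : X) (phi : X -> G) (psi : S -> (X -> X)),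
    (forall s, in_Tgr mul x0 phi (psi s)) /\
    (forall s t, psi (smul s t) = (fun x => psi s (psi t x))) /\
    psi zero = (fun _ => x0) /\
    (forall s t, psi s = psi t -> s = t) /\
    (forall alpha s, comp_S zero deg alpha s -> in_T_comp mul x0 phi alpha (psi s)).
Proof.
  destruct HG as [mulA _], HS as [smulA [smul0l smulr0]].
  exists (option S * G)%type, (base_pt one zero), snd, (cayley mul one smul zero deg).
  split; [| split; [| split; [| split]]].
  - intros s; exists (deg s); now apply cayley_graded.
  - intros s t; now apply cayleyM.
  - now apply cayley0.
  - apply cayley_inj.
  - intros alpha s; now apply cayley_comp.
Qed.
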